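(* Fix $k\ge2$ and let $Z^{(1)},\dots,Z^{(k)}$ be independent copies of $Z$. Assume $\mathbb{E}\min_{1\le i\le k}Z^{(i)}=\infty$. Then, in the $k$-choice model, with probability one, $\liminf_{n\to\infty}\Lambda_n<\infty$.
   Context: Let $Z$ be a random variable on $\mathbb{N}=\{1,2,3,\dots\}$. Fix $k\ge2$ and let $(Z^{(1)}_n)_{n\ge1},\dots,(Z^{(k)}_n)_{n\ge1}$ be $k$ independent sequences of i.i.d. random variables, all distributed as $Z$ and mutually independent. The $k$-choice model: define $T_n=\{n\}$ for $n\le0$ and $T_n=\{n\}\cup\bigcup_{i=1}^k T_{n-Z^{(i)}_n}$ for $n\ge1$. Let $\mathcal{L}_n=T_n\cap\{0,-1,-2,\dots\}$ and $\Lambda_n=|\mathcal{L}_n|$. *)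

From HB Require Import structures.
From mathcomp Require Import all_boot all_order all_algebra.
From mathcomp Require Import all_classical all_reals all_analysis.
Set Implicit Arguments. Unset Strict Implicit. Unset Printing Implicit Defensive.
Import Order.TTheory GRing.Theory Num.Theory.
Local Open Scope classical_set_scope.
Local Open Scope ring_scope.

(* The k-choice random tree.  [z i n] is the value Z^{(i)}_n (only n >= 1 is used).
   T_n = {n} for n <= 0, T_n = {n} \cup \bigcup_i T_{n - z i n} for n >= 1.
   Computed with fuel; fuel |n|+1 is sufficient whenever all z i n >= 1. *)
Fixpoint kTree_fuel (k : nat) (z : 'I_k -> nat -> nat) (fuel : nat) (n : int)
  : seq int :=
  match fuel with
  | 0%N => [:: n]
  | f.+1 =>
      if n <= 0 then [:: n]
      else n :: flatten [seq kTree_fuel z f (n - (z i `|n|%N)%:Z) | i <- enum 'I_k]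
  end.

(* T_n as a (duplicate-carrying) list of its elements. *)
Definition kTree (k : nat) (z : 'I_k -> nat -> nat) (n : int) : seq int :=
  kTree_fuel z (`|n|%N).+1 n.

Definition Lambda (k : nat) (z : 'I_k -> nat -> nat) (n : nat) : nat :=
  size (undup [seq x <- kTree z n%:Z | x <= 0]).

(* minimum of f over 'I_k (the neutral element \max_i f i is harmless) *)
Definition kmin (k : nat) (f : 'I_k -> nat) : nat :=
  (\big[minn/(\max_(i < k) f i)%N]_(i < k) f i)%N.

Definition iid_family d (T : measurableType d) (R : realType)
  (P : probability T R) (k : nat) (Zs : 'I_k -> nat -> T -> nat) : Prop :=
  [/\ (forall i n (B : set nat), measurable (Zs i n @^-1` B)),
      (forall i j n m (B : set nat), (0 < n)%N -> (0 < m)%N ->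
          P (Zs i n @^-1` B) = P (Zs j m @^-1` B)) &
      (forall (J : seq ('I_k * nat)) (B : 'I_k * nat -> set nat),
          uniq J -> all (fun p => (0 < p.2)%N) J ->
          fine (P (\bigcap_(p in [set p | p \in J]) (Zs p.1 p.2 @^-1` B p)))
          = \prod_(p <- J) fine (P (Zs p.1 p.2 @^-1` B p)))].

From HB Require Import structures.
From mathcomp Require Import all_boot all_order all_algebra.
From mathcomp Require Import all_classical all_reals all_analysis.
From mathcomp Require Import measurable_realfun lra ring.
Import Order.TTheory GRing.Theory Num.Theory.
Local Open Scope classical_set_scope.
Local Open Scope ring_scope.

(* If all k jumps out of n overshoot the origin (Z^{(i)}_n >= n for every i), then T_n is n
   together with at most k nonpositive points, so Lambda_n <= k. These events are independent
   and, by identical distribution, the n-th one has probability P(min_i Z^{(i)} >= n); the sum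
   of these tail probabilities is E min_i Z^{(i)} = +oo. The second Borel-Cantelli lemma, proved
   through P(none of E_N, ..., E_{b-1}) = prod (1 - p_n) <= 1 / (1 + sum p_n), makes them occur
   infinitely often almost surely, whence liminf Lambda_n <= k. *)

Lemma kmin_geP k (f : 'I_k -> nat) n : (0 < k)%N ->
  (n <= kmin f)%N <-> (forall i, (n <= f i)%N).
Proof.
move=> k0; rewrite /kmin -minEnat.
have := @bigmin_geP _ nat 'I_k (\max_(i < k) f i) n xpredT f.
move=> /rwP <-; split => [[_ fge] i|fge]; first exact: fge.
by split=> //; rewrite leEnat (leq_trans (fge (Ordinal k0))) ?leq_bigmax.
Qed.

Lemma Lambda_le_k k (z : 'I_k -> nat -> nat) (n : nat) :
  (0 < n)%N -> (forall i, n <= z i n)%N -> (Lambda z n <= k)%N.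
Proof.
case: n => [//|n] _ zge; rewrite /Lambda /kTree /=.
set children := flatten _.
have -> : children = [seq n.+1%:Z - (z i n.+1)%:Z | i <- enum 'I_k].
  rewrite /children; under eq_map => i do rewrite subr_le0 lez_nat zge.
  by elim: (enum 'I_k) => //= i s ->.
rewrite (leq_trans (size_undup _)) // size_filter (leq_trans (count_size _ _)) //.
by rewrite size_map size_enum_ord.
Qed.

Lemma prod1B_mul1D_sum_le1 {R : realDomainType} {I : Type} (s : seq I) (p : I -> R) :
  (forall i, 0 <= p i <= 1) ->
  \prod_(i <- s) (1 - p i) * (1 + \sum_(i <- s) p i) <= 1.
Proof.
move=> p01.
(* the two bounds on the product keep the induction going *)
suff [_ _ ->] : [/\ 0 <= \prod_(i <- s) (1 - p i), \prod_(i <- s) (1 - p i) <= 1 &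
    \prod_(i <- s) (1 - p i) * (1 + \sum_(i <- s) p i) <= 1] by [].
elim: s => [|a s [Q0 Q1 QS]]; first by rewrite !big_nil addr0 mulr1.
rewrite !big_cons; set Q := \prod_(i <- s) _ in Q0 Q1 QS *.
set S := \sum_(i <- s) _ in QS *.
have /andP [pa0 pa1] := p01 a.
have S0 : 0 <= S by rewrite sumr_ge0 // => i _; case/andP: (p01 i).
split; [by rewrite mulr_ge0 ?subr_ge0 | | nra].
by rewrite -[1]mul1r ler_pM ?subr_ge0 //; lra.
Qed.

Lemma nneseries_pinfty_partial_gt {R : realType} {u : nat -> R} :
  (forall n, 0 <= u n) -> (\sum_(n <oo) (u n)%:E = +oo)%E ->
  forall N C, exists b, C < \sum_(N <= n < b) u n.
Proof.
move=> u0 uoo N C; apply: contrapT => /forallNP Cge.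
have {}Cge b : \sum_(N <= n < b) u n <= C by rewrite leNgt; apply/negP/Cge.
suff : (\sum_(n <oo) (u n)%:E <= (\sum_(n < N) u n + C)%:E)%E by rewrite uoo leNgt ltey.
apply: lime_le; first by apply: is_cvg_nneseries => n _ _; rewrite lee_fin.
apply: nearW => b; rewrite sumEFin lee_fin -(big_mkord xpredT).
have C0 : 0 <= C by have := Cge N; rewrite big_geq.
have [Nb|bN] := leqP N b; first by rewrite (big_cat_nat (n := N)) // ?Nb lerD2l.
by rewrite [X in _ <= X + _](big_cat_nat (n := b)) ?(ltnW bN) //= -addrA lerDl addr_ge0 ?sumr_ge0.
Qed.

Lemma integral_nat_tail_sum d (T : measurableType d) (R : realType)
    (mu : {measure set T -> \bar R}) (X : T -> nat) :
  (forall n, measurable [set w | (n < X w)%N]) ->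
  (\int[mu]_w ((X w)%:R%:E) = \sum_(n <oo) mu [set w | (n < X w)%N])%E.
Proof.
move=> mX.
pose f n w := (\1_[set w | (n < X w)%N] w : R)%:E.
have -> : (fun w => ((X w)%:R)%:E) = fun w => (\sum_(n <oo) f n w)%E.
  apply/funext => w; rewrite (nneseries_split 0 (X w)); last by move=> n _; rewrite lee_fin.
  rewrite eseries0 => [|n /= Xn _]; last by rewrite /f indicE memNset //= ltnNge Xn.
  rewrite adde0 /= add0n sumEFin /f.
  rewrite big_nat_cond (eq_bigr (fun _ => 1)) -?big_nat_cond ?sumr_const_nat ?subn0 //.
  by move=> n /andP [/andP [_ nX] _]; rewrite indicE mem_set.
have mf n : measurable_fun setT (f n).
  by apply/measurable_EFinP; apply: measurable_indic.
rewrite integral_nneseries //; last by move=> n w _; rewrite lee_fin.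
by apply: eq_eseriesr => n _; rewrite integral_indic // setIT.
Qed.

Section SecondBorelCantelli.
Context {d} {T : measurableType d} {R : realType} {P : probability T R}.
Context {E : (set T)^nat}.
Hypothesis mE : forall n, measurable (E n).
Hypothesis indepE : forall S : seq nat, uniq S ->
  fine (P (\big[setI/setT]_(n <- S) E n)) = \prod_(n <- S) fine (P (E n)).

Let p n := fine (P (E n)).

Let p01 n : 0 <= p n <= 1.
Proof.
rewrite /p fine_ge0 //= -lee_fin fineK ?fin_num_measure //.
exact: probability_le1.
Qed.

Lemma indep_setIC_prod (S L : seq nat) : uniq (S ++ L) ->
  fine (P (\big[setI/setT]_(n <- S) E n `&` \big[setI/setT]_(n <- L) ~` E n))
  = \prod_(n <- S) p n * \prod_(n <- L) (1 - p n).
Proof.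
elim: L S => [|a L IH] S uSL.
  by rewrite !big_nil setIT mulr1; apply: indepE; rewrite cats0 in uSL.
have uaSL : uniq ((a :: S) ++ L) by rewrite -(perm_uniq (introT permPl (perm_catCA S [:: a] L))).
have uSL' : uniq (S ++ L) by case/andP: uaSL.
set X := \big[setI/setT]_(n <- S) E n `&` \big[setI/setT]_(n <- L) ~` E n.
have mX : measurable X.
  by apply: measurableI; apply: bigsetI_measurable => n _; [|apply: measurableC].
have -> : \big[setI/setT]_(n <- S) E n `&` \big[setI/setT]_(n <- a :: L) ~` E n
          = X `\` E a by rewrite big_cons /X setDE; apply/seteqP; split=> w /=; tauto.
have XEa : X `&` E a = \big[setI/setT]_(n <- a :: S) E n `&` \big[setI/setT]_(n <- L) ~` E n.
  by rewrite big_cons /X; apply/seteqP; split=> w /=; tauto.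
rewrite measureD // ?ltey_eq ?fin_num_measure // fineB ?fin_num_measure //; last first.
  exact: measurableI.
rewrite XEa (IH S uSL') (IH (a :: S) uaSL) !big_cons /p; ring.
Qed.

Let tail N := \bigcap_(n in [set n | (N <= n)%N]) ~` E n.

Let mtail N : measurable (tail N).
Proof. by apply: bigcap_measurableType => n _; apply: measurableC. Qed.

Lemma tail_mul1D_sum_le1 N b :
  fine (P (tail N)) * (1 + \sum_(N <= n < b) p n) <= 1.
Proof.
have S0 : 0 <= 1 + \sum_(N <= n < b) p n.
  by rewrite addr_ge0 // sumr_ge0 // => n _; case/andP: (p01 n).
apply: le_trans (prod1B_mul1D_sum_le1 (index_iota N b) p p01); rewrite ler_wpM2r //.
have := indep_setIC_prod [::] (index_iota N b).
rewrite !big_nil setTI mul1r => <-; last exact: iota_uniq.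
have mI : measurable (\big[setI/setT]_(N <= n < b) ~` E n).
  by apply: (@bigsetI_measurable _ T) => n _; apply: measurableC.
rewrite fine_le ?fin_num_measure // le_measure ?inE //.
move=> w tail_w; rewrite -bigcap_seq => n /=; rewrite mem_index_iota => /andP [Nn _].
exact: tail_w.
Qed.

Theorem second_borel_cantelli :
  (\sum_(n <oo) P (E n) = +oo)%E -> P.-negligible (~` lim_sup_set E).
Proof.
move=> Eoo; rewrite /lim_sup_set setC_bigcap.
apply: negligible_bigcup => N; rewrite setC_bigcup; apply/negligibleP; first exact: mtail.
have poo : (\sum_(n <oo) (p n)%:E = +oo)%E.
  by rewrite -Eoo; apply: eq_eseriesr => n _; rewrite fineK ?fin_num_measure.
rewrite -/(tail N) -[LHS]fineK ?fin_num_measure //.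
set x := fine (P (tail N)); have x0 : 0 <= x by rewrite fine_ge0.
suff -> : x = 0 by [].
apply/eqP; rewrite eq_le x0 andbT leNgt; apply/negP => xpos.
have p0 n : 0 <= p n by case/andP: (p01 n).
have [b Sgt] := nneseries_pinfty_partial_gt p0 poo N x^-1.
have := tail_mul1D_sum_le1 N b; rewrite -/x.
have : 1 < x * \sum_(N <= n < b) p n by rewrite -(mulfV (lt0r_neq0 xpos)) ltr_pM2l.
lra.
Qed.
End SecondBorelCantelli.
Definition children_nonpos {T : Type} {k : nat} (Zs : 'I_k -> nat -> T -> nat) (n : nat)
  : set T := \bigcap_i Zs i n @^-1` [set m | (n <= m)%N].

Lemma bigsetI_bigcap_pairs {T : Type} {k : nat} (F : 'I_k * nat -> set T) (S : seq nat) :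
  \big[setI/setT]_(n <- S) (\bigcap_i F (i, n))
  = \bigcap_(p in [set` [seq (i, n) | n <- S, i <- enum 'I_k]]) F p.
Proof.
rewrite -bigcap_seq; apply/seteqP; split => w /= Fw.
  by move=> _ /allpairsP [[n i] /= [nS _ ->]]; apply: Fw.
by move=> n nS i _; apply: Fw; apply/allpairsP; exists (n, i); rewrite mem_enum.
Qed.

Section KChoiceEvents.
Context {d} {T : measurableType d} {R : realType} {P : probability T R}.
Context {k : nat} {Zs : 'I_k -> nat -> T -> nat}.
Hypothesis iid : iid_family P Zs.

Lemma iid_bigcap_prod (F : 'I_k * nat -> set nat) (S : seq nat) :
  uniq S -> all (fun n => (0 < n)%N) S ->
  fine (P (\big[setI/setT]_(n <- S) (\bigcap_i Zs i n @^-1` F (i, n))))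
  = \prod_(n <- S) \prod_i fine (P (Zs i n @^-1` F (i, n))).
Proof.
move=> uS S0; case: iid => _ _ indep.
rewrite (bigsetI_bigcap_pairs (fun p => Zs p.1 p.2 @^-1` F p)) indep.
- rewrite big_allpairs_dep; apply: eq_bigr => n _.
  by rewrite -big_enum.
- apply: allpairs_uniq => //; first exact: enum_uniq.
  by move=> [? ?] [? ?] _ _ /= [-> ->].
- by apply/allP => _ /allpairsP [[n i] /= [nS _ ->]]; apply: (allP S0).
Qed.

Lemma measurable_children_nonpos n : measurable (children_nonpos Zs n).
Proof.
case: iid => mZ _ _.
by apply: fin_bigcap_measurable => [|i _]; [exact: finite_finset|apply: mZ].
Qed.

Lemma fine_P_children_nonpos n : (0 < n)%N ->
  fine (P (children_nonpos Zs n)) = \prod_i fine (P (Zs i n @^-1` [set m | (n <= m)%N])).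
Proof.
move=> n_gt0; have := iid_bigcap_prod (fun p => [set m | (p.2 <= m)%N]) [:: n].
by rewrite !big_seq1 => -> //=; rewrite n_gt0.
Qed.

Lemma children_nonpos_indep (S : seq nat) : uniq S ->
  fine (P (\big[setI/setT]_(n <- S) children_nonpos Zs n.+1))
  = \prod_(n <- S) fine (P (children_nonpos Zs n.+1)).
Proof.
move=> uS; have := iid_bigcap_prod (fun p => [set m | (p.2 <= m)%N]) (map succn S).
rewrite !big_map => -> //.
- by apply: eq_bigr => n _; rewrite fine_P_children_nonpos.
- by rewrite map_inj_uniq //; apply: succn_inj.
- by apply/allP => _ /mapP [n _ ->].
Qed.

Hypothesis k_gt0 : (0 < k)%N.

Lemma kmin_ge_bigcap n :
  [set w | (n <= kmin (fun i => Zs i 1%N w))%N] = \bigcap_i Zs i 1%N @^-1` [set m | (n <= m)%N].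
Proof.
apply/seteqP; split => w /=; first by move/(kmin_geP _ _ _ k_gt0) => ge i _; apply: ge.
by move=> ge; apply/(kmin_geP _ _ _ k_gt0) => i; apply: ge.
Qed.

Lemma measurable_kmin_ge n : measurable [set w | (n <= kmin (fun i => Zs i 1%N w))%N].
Proof.
rewrite kmin_ge_bigcap; case: iid => mZ _ _.
by apply: fin_bigcap_measurable => [|i _]; [exact: finite_finset|apply: mZ].
Qed.

(* Identical distribution moves the k events at time n back to time 1. *)
Lemma P_children_nonpos n : (0 < n)%N ->
  P (children_nonpos Zs n) = P [set w | (n <= kmin (fun i => Zs i 1%N w))%N].
Proof.
move=> n_gt0; have mC := measurable_children_nonpos n; have mK := measurable_kmin_ge n.
rewrite -[LHS]fineK ?fin_num_measure // -[RHS]fineK ?fin_num_measure //.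
congr (EFin _); rewrite fine_P_children_nonpos // kmin_ge_bigcap.
have := iid_bigcap_prod (fun=> [set m | (n <= m)%N]) [:: 1%N].
rewrite !big_seq1 => -> //; apply: eq_bigr => i _.
by case: iid => _ iden _; rewrite (iden i i n 1%N).
Qed.

End KChoiceEvents.

Theorem mainTheorem15 (d : measure_display) (T : measurableType d)
  (R : realType) (P : probability T R) (k : nat)
  (Zs : 'I_k -> nat -> T -> nat) :
  (2 <= k)%N ->
  iid_family P Zs ->
  (forall i n w, (0 < n)%N -> (1 <= Zs i n w)%N) ->
  (\int[P]_w ((kmin (fun i => Zs i 1%N w))%:R : R)%:E = +oo)%E ->
  {ae P, forall w,
     exists M : nat, forall N : nat, exists2 n : nat,
       (N <= n)%N & (Lambda (fun i m => Zs i m w) n <= M)%N}.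
Proof.
move=> k_ge2 iid _ min_oo; have k_gt0 : (0 < k)%N := ltnW k_ge2.
pose A n := children_nonpos Zs n.+1.
have A_oo : (\sum_(n <oo) P (A n) = +oo)%E.
  rewrite -min_oo integral_nat_tail_sum => [|n]; last exact: measurable_kmin_ge iid k_gt0 n.+1.
  by apply: eq_eseriesr => n _; rewrite /A P_children_nonpos.
have := second_borel_cantelli (fun n => measurable_children_nonpos iid n.+1)
  (children_nonpos_indep iid) A_oo.
apply: negligibleS; apply: subsetC => w A_io /=; exists k => N.
have [j /= Nj Ajw] := A_io N I.
exists j.+1; first exact: leqW.
by apply: Lambda_le_k => // i; apply: Ajw.
Qed.
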